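(* Let $B$ be a simple Bratteli diagram of rank $d\ge 2$ all of whose incidence matrices have strictly positive entries. Then both $\mathcal P_B$ and its complement $\mathcal O_B\setminus\mathcal P_B$ are dense in $\mathcal O_B$.
   Context: A Bratteli diagram $B=(V^*,E)$ consists of a vertex set $V^*=\bigsqcup_{n\ge 0}V_n$ and edge set $E=\bigsqcup_{n\ge1}E_n$, where $V_0=\{v_0\}$, all $V_n,E_n$ are finite, and there are maps $r,s:E\to V^*$ with $r(E_n)=V_n$, $s(E_n)=V_{n-1}$, $s^{-1}(v)\neq\emptyset$ for all $v$ and $r^{-1}(v)\neq\emptyset$ for $v\neq v_0$. The incidence matrix $F_n=(f^{(n)}_{v,w})_{v\in V_{n+1},w\in V_n}$ has $f^{(n)}_{v,w}$ = number of edges in $E_{n+1}$ from $w$ to $v$. $X_B$ is the space of infinite paths from $v_0$ with the cylinder topology. Standing assumptions: $B$ is aperiodic (every tail-equivalence class of $X_B$ is infinite), $X_B$ is a Cantor set, and $B$ is not a disjoint union of two subdiagrams sharing only $v_0$. $B$ is simple if for every $n$ there is $m>n$ such that every vertex of $V_n$ is joined by a path to every vertex of $V_m$; $B$ has rank $d$ if $\sup_n|V_n|<\infty$ and $d$ is the smallest integer with $|V_n|=d$ infinitely often. An ordering $\omega$ is a linear order on each $r^{-1}(v)$, $v\neq v_0$; $\mathcal O_B=\prod_{v\in V^*\setminus V_0}P_v$ where $P_v$ is the (discrete) set of linear orders on $r^{-1}(v)$, with the product topology. Maximal/minimal paths and Vershik maps are defined as usual: a Vershik map is a homeomorphism $\varphi$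 of $X_B$ mapping the set of maximal infinite paths onto the set of minimal ones, and sending each non-maximal $x$ to the path obtained by replacing the first non-maximal edge $x_k$ by its successor in $r^{-1}(r(x_k))$ and $(x_1,\dots,x_{k-1})$ by the minimal path to the source of that successor. $\omega$ is perfect if a Vershik map exists; $\mathcal P_B$ is the set of perfect orderings. *)

From Stdlib Require Import Arith List.
Import ListNotations.

(* A Bratteli diagram, up to isomorphism, given by level sizes and incidence
   matrices.  V_n = {0, ..., nv n - 1}; V_0 = {v_0} = {0}.
   inc n v w = f^{(n)}_{v,w} = number of edges of E_{n+1} from w in V_n to
   v in V_{n+1}.  The edges of E_{n+1} from w to v are labelled 0..inc n v w - 1. *)
Record Bratteli := {
  nv : nat -> nat;
  inc : nat -> nat -> nat -> nat;
  nv_0 : nv 0 = 1;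
  src_ne : forall n w, w < nv n -> exists v, v < nv (S n) /\ 0 < inc n v w;
  rng_ne : forall n v, v < nv (S n) -> exists w, w < nv n /\ 0 < inc n v w
}.

(* r^{-1}(v) for v in V_{n+1}: edges identified by (source w, label k). *)
Definition in_r (B : Bratteli) (n v : nat) (e : nat * nat) : Prop :=
  fst e < nv B n /\ snd e < inc B n v (fst e).

Definition positive_incidence (B : Bratteli) : Prop :=
  forall n v w, v < nv B (S n) -> w < nv B n -> 0 < inc B n v w.

Fixpoint reach (B : Bratteli) (n v j u : nat) : Prop :=
  match j with
  | 0 => u = v
  | S j' => exists w, w < nv B (n + j') /\ reach B n v j' w /\ 0 < inc B (n + j') u w
  end.

Definition simple (B : Bratteli) : Prop :=
  forall n, exists m, n < m /\
    forall v u, v < nv B n -> u < nv B m -> reach B n v (m - n) u.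

Definition infinitely_often (P : nat -> Prop) : Prop :=
  forall N, exists n, N <= n /\ P n.

Definition has_rank (B : Bratteli) (d : nat) : Prop :=
  (exists M, forall n, nv B n <= M) /\
  infinitely_often (fun n => nv B n = d) /\
  (forall d', d' < d -> ~ infinitely_often (fun n => nv B n = d')).

(* omega n v is a (strict) order relation on r^{-1}(v), v in V_{n+1}. *)
Definition order_data := nat -> nat -> nat * nat -> nat * nat -> Prop.

Definition strict_linear (D : nat * nat -> Prop) (R : nat * nat -> nat * nat -> Prop) : Prop :=
  (forall a, D a -> ~ R a a) /\
  (forall a b c, D a -> D b -> D c -> R a b -> R b c -> R a c) /\
  (forall a b, D a -> D b -> a = b \/ R a b \/ R b a).

Definition is_ordering (B : Bratteli) (om : order_data) : Prop :=
  forall n v, v < nv B (S n) -> strict_linear (in_r B n v) (om n v).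

(* x i = (r(x_{i+1}), label of x_{i+1}); the source of x_{i+1} is r(x_i)
   (or v_0 = 0 for i = 0). *)
Definition path := nat -> nat * nat.

Definition src (x : path) (i : nat) : nat :=
  match i with 0 => 0 | S j => fst (x j) end.

Definition is_path (B : Bratteli) (x : path) : Prop :=
  forall i, fst (x i) < nv B (S i) /\ snd (x i) < inc B i (fst (x i)) (src x i).

(* the (i+1)-th edge of x as an element of r^{-1}(fst (x i)) *)
Definition edge_at (x : path) (i : nat) : nat * nat := (src x i, snd (x i)).

Definition is_max (B : Bratteli) (om : order_data) (n v : nat) (e : nat * nat) : Prop :=
  forall e', in_r B n v e' -> ~ om n v e e'.
Definition is_min (B : Bratteli) (om : order_data) (n v : nat) (e : nat * nat) : Prop :=
  forall e', in_r B n v e' -> ~ om n v e' e.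
Definition is_succ (B : Bratteli) (om : order_data) (n v : nat) (e e' : nat * nat) : Prop :=
  in_r B n v e' /\ om n v e e' /\
  forall e'', in_r B n v e'' -> om n v e e'' -> ~ om n v e'' e'.

Definition max_path (B : Bratteli) (om : order_data) (x : path) : Prop :=
  forall i, is_max B om i (fst (x i)) (edge_at x i).
Definition min_path (B : Bratteli) (om : order_data) (x : path) : Prop :=
  forall i, is_min B om i (fst (x i)) (edge_at x i).

Definition agree_upto (x y : path) (m : nat) : Prop := forall i, i < m -> x i = y i.

Definition continuous_on (B : Bratteli) (phi : path -> path) : Prop :=
  forall x, is_path B x -> forall n, exists m, forall y, is_path B y ->
    agree_upto x y m -> agree_upto (phi x) (phi y) n.

Definition homeomorphism (B : Bratteli) (phi : path -> path) : Prop :=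
  (forall x, is_path B x -> is_path B (phi x)) /\ continuous_on B phi /\
  exists psi, (forall x, is_path B x -> is_path B (psi x)) /\ continuous_on B psi /\
    (forall x, is_path B x -> forall i, psi (phi x) i = x i) /\
    (forall x, is_path B x -> forall i, phi (psi x) i = x i).

Definition vershik_map (B : Bratteli) (om : order_data) (phi : path -> path) : Prop :=
  homeomorphism B phi /\
  (forall x, is_path B x -> max_path B om x -> min_path B om (phi x)) /\
  (forall y, is_path B y -> min_path B om y ->
     exists x, is_path B x /\ max_path B om x /\ forall i, phi x i = y i) /\
  (forall x, is_path B x -> forall k,
     ~ is_max B om k (fst (x k)) (edge_at x k) ->
     (forall j, j < k -> is_max B om j (fst (x j)) (edge_at x j)) ->
     (forall j, k < j -> phi x j = x j) /\
     fst (phi x k) = fst (x k) /\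
     is_succ B om k (fst (x k)) (edge_at x k) (edge_at (phi x) k) /\
     (forall j, j < k -> is_min B om j (fst (phi x j)) (edge_at (phi x) j))).

Definition perfect (B : Bratteli) (om : order_data) : Prop :=
  exists phi, vershik_map B om phi.

(* density in O_B (product of discrete spaces): every basic open set,
   i.e. prescribing the orders at finitely many vertices, meets P. *)
Definition agree_at (B : Bratteli) (om om' : order_data) (n v : nat) : Prop :=
  forall e e', in_r B n v e -> in_r B n v e' -> (om n v e e' <-> om' n v e e').

Definition dense_in_orderings (B : Bratteli) (P : order_data -> Prop) : Prop :=
  forall om, is_ordering B om -> forall L : list (nat * nat),
    exists om', is_ordering B om' /\ P om' /\
      forall n v, In (n, v) L -> v < nv B (S n) -> agree_at B om om' n v.

(* A basic open set of O_B prescribes the order at finitely many vertices, all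
   below some level M.  Both halves keep an arbitrary ordering below M and
   "glue" an explicit ordering on top of it (dense_by_gluing).  Since the rank is
   at least 2 and all incidences are positive, from some level on there are two
   vertices 0 and 1, and each vertex receives edges from both of them.

   Order each r^{-1}(v) by source, source 1 first and source 0
   last.  Then all minimal edges eventually come from 1 and all maximal edges
   from 0.  A general criterion (perfect_of_extreme_sources) shows that such an
   ordering is perfect: the Vershik map is defined pointwise by choice, and its
   continuity and invertibility come from the uniqueness of the minimal finite
   path to each vertex (min_chain_unique).

   Use the same order, except that r^{-1}(1) is ordered with
   source 0 first.  Minimal paths then alternate between 0 and 1, so a Vershik
   map would send paths leaving the maximal path "stay at 0" at level k to paths
   whose vertex at level M depends on the parity of k; this contradicts
   continuity at that maximal path. *)

From Stdlib Require Import Arith List Lia Classical ClassicalEpsilon.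

Lemma list_minimal {T : Type} (R : T -> T -> Prop) (P : T -> Prop)
  (irr : forall a, P a -> ~ R a a)
  (tr : forall a b c, P a -> P b -> P c -> R a b -> R b c -> R a c) :
  forall l, (exists a, P a /\ In a l) ->
  exists m, P m /\ forall b, P b -> In b l -> ~ R b m.
Proof.
  induction l as [|x l IH]; intros [a [Pa Ia]]; [destruct Ia|].
  destruct (classic (exists a, P a /\ In a l)) as [Hl|Hl].
  - destruct (IH Hl) as [m [Pm Hm]].
    destruct (classic (P x /\ R x m)) as [[Px Rxm]|Hx].
    + exists x. split; [exact Px|]. intros b Pb [<-|Ib]; [now apply irr|].
      intro Rbx. exact (Hm b Pb Ib (tr b x m Pb Px Pm Rbx Rxm)).
    + exists m. split; [exact Pm|]. intros b Pb [<-|Ib]; [tauto|now apply Hm].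
  - destruct Ia as [->|Ia]; [|exfalso; eauto].
    exists a. split; [exact Pa|]. intros b Pb [<-|Ib]; [now apply irr|exfalso; eauto].
Qed.

Definition in_r_list (B : Bratteli) (n v : nat) : list (nat * nat) :=
  flat_map (fun w => map (fun k => (w, k)) (seq 0 (inc B n v w))) (seq 0 (nv B n)).

Lemma in_r_list_complete B n v e : in_r B n v e -> In e (in_r_list B n v).
Proof.
  destruct e as [w k]. intros [Hw Hk]. simpl in Hw, Hk.
  apply in_flat_map. exists w. split; [apply in_seq; lia|].
  apply in_map_iff. exists k. split; [reflexivity|apply in_seq; lia].
Qed.

Lemma exists_minimal_in_r B n v (R : nat * nat -> nat * nat -> Prop) (P : nat * nat -> Prop) :
  strict_linear (in_r B n v) R -> (forall a, P a -> in_r B n v a) -> (exists a, P a) ->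
  exists m, P m /\ forall b, P b -> ~ R b m.
Proof.
  intros [Hirr [Htr _]] HP [a Pa].
  destruct (list_minimal R P (fun a Pa => Hirr a (HP a Pa))
     (fun a b c Pa Pb Pc => Htr a b c (HP a Pa) (HP b Pb) (HP c Pc)) (in_r_list B n v))
    as [m [Pm Hm]].
  - exists a. split; [exact Pa|apply in_r_list_complete; auto].
  - exists m. split; [exact Pm|]. intros b Pb. apply Hm; [exact Pb|apply in_r_list_complete; auto].
Qed.

(* The reverse ordering: maximal edges become minimal and vice versa, and a
   Vershik map of the reverse ordering is an inverse of the Vershik map. *)
Definition reverse (om : order_data) : order_data := fun n v a b => om n v b a.

Lemma reverse_ordering B om : is_ordering B om -> is_ordering B (reverse om).
Proof.
  intros H n v Hv. destruct (H n v Hv) as [Hi [Ht Hto]]. unfold reverse. split; [|split].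
  - intros a Ha. apply Hi; auto.
  - intros a b c Ha Hb Hc H1 H2. exact (Ht c b a Hc Hb Ha H2 H1).
  - intros a b Ha Hb. destruct (Hto a b Ha Hb) as [E|[E|E]]; auto.
Qed.

Lemma succ_reverse B om n v e e' :
  in_r B n v e -> is_succ B om n v e e' -> is_succ B (reverse om) n v e' e.
Proof.
  intros He [I' [R H]]. split; [exact He|split; [exact R|]].
  intros e'' I'' R1 R2. exact (H e'' I'' R2 R1).
Qed.

Lemma succ_not_min B om n v e e' : in_r B n v e -> is_succ B om n v e e' -> ~ is_min B om n v e'.
Proof. intros He [_ [R _]] Hm. exact (Hm e He R). Qed.

(* Minimal edges and successors exist (edges into a vertex are finitely many)
   and are unique (the order is linear). *)
Section ExtremeEdges.
Variables (B : Bratteli) (om : order_data).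
Hypothesis om_ord : is_ordering B om.

Lemma min_unique n v a b : v < nv B (S n) ->
  in_r B n v a -> in_r B n v b -> is_min B om n v a -> is_min B om n v b -> a = b.
Proof.
  intros Hv Ha Hb Ma Mb. destruct (om_ord n v Hv) as [_ [_ Hto]].
  destruct (Hto a b Ha Hb) as [E|[E|E]]; [exact E|exfalso; exact (Mb a Ha E)|exfalso; exact (Ma b Hb E)].
Qed.

Lemma succ_unique n v e a b : v < nv B (S n) ->
  is_succ B om n v e a -> is_succ B om n v e b -> a = b.
Proof.
  intros Hv [Ia [Ra Ha]] [Ib [Rb Hb]]. destruct (om_ord n v Hv) as [_ [_ Hto]].
  destruct (Hto a b Ia Ib) as [E|[E|E]];
    [exact E|exfalso; exact (Hb a Ia Ra E)|exfalso; exact (Ha b Ib Rb E)].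
Qed.

Lemma exists_min n v : v < nv B (S n) -> exists e, in_r B n v e /\ is_min B om n v e.
Proof.
  intros Hv. destruct (rng_ne B n v Hv) as [w [Hw Hi]].
  destruct (exists_minimal_in_r B n v (om n v) (in_r B n v) (om_ord n v Hv) (fun a Ha => Ha))
    as [m [Pm Hm]]; [exists (w, 0); split; simpl; lia|].
  exists m. split; [exact Pm|]. intros e' He'. now apply Hm.
Qed.

Lemma exists_succ n v e : v < nv B (S n) -> in_r B n v e ->
  ~ is_max B om n v e -> exists e', is_succ B om n v e e'.
Proof.
  intros Hv He Hm.
  assert (Hbig : exists e', in_r B n v e' /\ om n v e e').
  { apply NNPP. intro C. apply Hm. intros e' He' R. apply C. eauto. }
  destruct (exists_minimal_in_r B n v (om n v) (fun b => in_r B n v b /\ om n v e b)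
     (om_ord n v Hv) (fun a Ha => proj1 Ha) Hbig) as [m [[Im Rm] Hmin]].
  exists m. split; [exact Im|split; [exact Rm|]].
  intros e'' I'' R''. apply Hmin. split; assumption.
Qed.

End ExtremeEdges.

Definition edge_ok (B : Bratteli) (x : path) (j : nat) : Prop :=
  fst (x j) < nv B (S j) /\ snd (x j) < inc B j (fst (x j)) (src x j) /\ src x j < nv B j.

Lemma path_edge_ok B x : is_path B x -> forall j, edge_ok B x j.
Proof.
  intros H j. destruct (H j) as [H1 H2]. split; [exact H1|split; [exact H2|]].
  destruct j as [|j]; simpl; [rewrite (nv_0 B); lia|exact (proj1 (H j))].
Qed.

Lemma edge_ok_path B x : (forall j, edge_ok B x j) -> is_path B x.
Proof. intros H j. destruct (H j) as [H1 [H2 _]]. split; assumption. Qed.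

Lemma edge_ok_in_r B x j : edge_ok B x j -> in_r B j (fst (x j)) (edge_at x j).
Proof. intros [_ [H2 H3]]. split; assumption. Qed.

Lemma path_in_r B x j : is_path B x -> in_r B j (fst (x j)) (edge_at x j).
Proof. intros H. apply edge_ok_in_r, path_edge_ok, H. Qed.

Lemma edge_at_eq_point (a b : path) k :
  fst (a k) = fst (b k) -> edge_at a k = edge_at b k -> a k = b k.
Proof.
  unfold edge_at. intros E1 E2. injection E2 as _ E3.
  destruct (a k), (b k). simpl in *. congruence.
Qed.

Lemma agree_src x y m j : agree_upto x y m -> j <= m -> src x j = src y j.
Proof. intros Ag Hj. destruct j as [|j]; [reflexivity|]. cbn [src]. rewrite Ag; [reflexivity|lia]. Qed.

Definition splice (s : path) (k : nat) (p : nat * nat) (x : path) : path :=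
  fun j => if j <? k then s j else if j =? k then p else x j.

Lemma splice_lt s k p x j : j < k -> splice s k p x j = s j.
Proof. intros H. unfold splice. destruct (Nat.ltb_spec j k); [reflexivity|lia]. Qed.

Lemma splice_at s k p x : splice s k p x k = p.
Proof. unfold splice. rewrite Nat.ltb_irrefl, Nat.eqb_refl. reflexivity. Qed.

Lemma splice_gt s k p x j : k < j -> splice s k p x j = x j.
Proof.
  intros H. unfold splice. destruct (Nat.ltb_spec j k); [lia|].
  destruct (Nat.eqb_spec j k); [lia|reflexivity].
Qed.

Lemma splice_self s k x j : k <= j -> splice s k (x k) x j = x j.
Proof.
  intros H. destruct (Nat.eq_dec j k) as [->|Hne]; [apply splice_at|apply splice_gt; lia].
Qed.

Lemma src_splice_le s k p x j : j <= k -> src (splice s k p x) j = src s j.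
Proof. intros H. destruct j as [|j]; [reflexivity|]. cbn [src]. rewrite splice_lt; [reflexivity|lia]. Qed.

Lemma src_splice_gt s k p x j :
  k < j -> fst p = src x (S k) -> src (splice s k p x) j = src x j.
Proof.
  intros H E. destruct j as [|j]; [lia|]. cbn [src].
  destruct (Nat.eq_dec j k) as [->|Hne]; [rewrite splice_at; exact E|].
  rewrite splice_gt; [reflexivity|lia].
Qed.

Definition min_chain (B : Bratteli) (om : order_data) (x : path) (k : nat) : Prop :=
  forall j, j < k -> edge_ok B x j /\ is_min B om j (fst (x j)) (edge_at x j).

Lemma min_chain_of_path B om x k : is_path B x ->
  (forall j, j < k -> is_min B om j (fst (x j)) (edge_at x j)) -> min_chain B om x k.
Proof. intros Px Hm j Hj. split; [apply path_edge_ok, Px|apply Hm, Hj]. Qed.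

Section MinimalChains.
Variables (B : Bratteli) (om : order_data).
Hypothesis om_ord : is_ordering B om.

Lemma min_chain_exists : forall k u, u < nv B k -> exists s, min_chain B om s k /\ src s k = u.
Proof.
  induction k as [|k IH]; intros u Hu.
  - exists (fun _ => (0, 0)). split; [intros j Hj; lia|]. simpl. rewrite (nv_0 B) in Hu. lia.
  - destruct (exists_min B om om_ord k u Hu) as [[w l] [[Hw Hl] Hmin]]. simpl in Hw, Hl.
    destruct (IH w Hw) as [s [Hs Hsrc]].
    exists (splice s k (u, l) s). split.
    + intros j Hj. unfold edge_ok, edge_at. rewrite src_splice_le by lia.
      destruct (Nat.lt_ge_cases j k) as [Lt|Ge]; [rewrite splice_lt by exact Lt; exact (Hs j Lt)|].
      replace j with k by lia. rewrite splice_at, Hsrc. simpl. auto.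
    + change (fst (splice s k (u, l) s k) = u). rewrite splice_at. reflexivity.
Qed.

Lemma min_chain_unique : forall k x z,
  min_chain B om x k -> min_chain B om z k -> src x k = src z k -> forall j, j < k -> x j = z j.
Proof.
  induction k as [|k IH]; intros x z Hx Hz Hs j Hj; [lia|].
  destruct (Hx k ltac:(lia)) as [Vx Mx]. destruct (Hz k ltac:(lia)) as [Vz Mz].
  cbn [src] in Hs.
  assert (Ee : edge_at x k = edge_at z k).
  { pose proof (edge_ok_in_r B z k Vz) as Iz. rewrite <- Hs in Iz, Mz.
    exact (min_unique B om om_ord k (fst (x k)) _ _ (proj1 Vx) (edge_ok_in_r B x k Vx) Iz Mx Mz). }
  destruct (Nat.eq_dec j k) as [->|Hne]; [exact (edge_at_eq_point x z k Hs Ee)|].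
  apply (IH x z); [intros i Hi; apply Hx; lia|intros i Hi; apply Hz; lia| |lia].
  change (fst (edge_at x k) = fst (edge_at z k)). rewrite Ee. reflexivity.
Qed.

Lemma agree_of_min_below k a b : is_path B a -> is_path B b ->
  (forall j, j < k -> is_min B om j (fst (a j)) (edge_at a j)) ->
  (forall j, j < k -> is_min B om j (fst (b j)) (edge_at b j)) ->
  fst (a k) = fst (b k) -> edge_at a k = edge_at b k -> forall j, j <= k -> a j = b j.
Proof.
  intros Pa Pb Ma Mb E1 E2 j Hj.
  destruct (Nat.eq_dec j k) as [->|Hne]; [exact (edge_at_eq_point a b k E1 E2)|].
  apply (min_chain_unique k); [now apply min_chain_of_path|now apply min_chain_of_path| |lia].
  change (fst (edge_at a k) = fst (edge_at b k)). rewrite E2. reflexivity.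
Qed.

End MinimalChains.

Definition first_nonmax (B : Bratteli) (om : order_data) (x : path) (k : nat) : Prop :=
  ~ is_max B om k (fst (x k)) (edge_at x k) /\
  forall j, j < k -> is_max B om j (fst (x j)) (edge_at x j).

Lemma first_nonmax_unique B om x k1 k2 : first_nonmax B om x k1 -> first_nonmax B om x k2 -> k1 = k2.
Proof.
  intros [N1 H1] [N2 H2]. destruct (lt_eq_lt_dec k1 k2) as [[L|E]|L];
    [exfalso; exact (N1 (H2 k1 L))|exact E|exfalso; exact (N2 (H1 k2 L))].
Qed.

Lemma least_witness (Q : nat -> Prop) : (exists i, Q i) -> exists k, Q k /\ forall j, j < k -> ~ Q j.
Proof.
  intros [i Qi]. revert Qi. induction i as [i IH] using lt_wf_ind. intros Qi.
  destruct (classic (exists j, j < i /\ Q j)) as [[j [Hj Qj]]|N]; [exact (IH j Hj Qj)|].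
  exists i. split; [exact Qi|]. intros j Hj Qj. apply N; eauto.
Qed.

Lemma first_nonmax_exists B om x : ~ max_path B om x -> exists k, first_nonmax B om x k.
Proof.
  intros Hn. apply not_all_ex_not in Hn. destruct (least_witness _ Hn) as [k [Hk Hl]].
  exists k. split; [exact Hk|]. intros j Hj. apply NNPP, Hl, Hj.
Qed.

Lemma first_nonmax_not_max B om x k : first_nonmax B om x k -> ~ max_path B om x.
Proof. intros [N _] H. exact (N (H k)). Qed.

Lemma first_nonmax_agree B om x y k m :
  agree_upto x y m -> k < m -> first_nonmax B om x k -> first_nonmax B om y k.
Proof.
  intros Ag Hk [Nk Hmax].
  assert (Edg : forall j, j <= k -> fst (y j) = fst (x j) /\ edge_at y j = edge_at x j).
  { intros j Hj. unfold edge_at. rewrite (agree_src x y m j Ag), (Ag j) by lia. auto. }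
  split.
  - destruct (Edg k (le_n k)) as [-> ->]. exact Nk.
  - intros j Hj. destruct (Edg j ltac:(lia)) as [-> ->]. apply Hmax, Hj.
Qed.

Definition min_sources (B : Bratteli) (om : order_data) (M : nat) (c : nat -> nat) : Prop :=
  (forall j, M <= j -> c j < nv B j) /\
  (forall j v e, M <= j -> v < nv B (S j) -> in_r B j v e -> is_min B om j v e -> fst e = c j).

Definition min_sources_along (B : Bratteli) (om : order_data) (M : nat) (c : nat -> nat) : Prop :=
  (forall j, M <= j -> c j < nv B j) /\
  (forall j e, M <= j -> in_r B j (c (S j)) e -> is_min B om j (c (S j)) e -> fst e = c j).

Lemma min_sources_along_of B om M c : min_sources B om M c -> min_sources_along B om M c.
Proof. intros [H1 H2]. split; [exact H1|]. intros j e Hj He Hm. apply (H2 j (c (S j)) e); auto. Qed.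

Definition min_edge (B : Bratteli) (om : order_data) (n v : nat) : nat * nat :=
  epsilon (inhabits (0, 0)) (fun e => in_r B n v e /\ is_min B om n v e).

Lemma min_edge_spec B om n v : is_ordering B om -> v < nv B (S n) ->
  in_r B n v (min_edge B om n v) /\ is_min B om n v (min_edge B om n v).
Proof. intros H Hv. unfold min_edge. apply epsilon_spec, exists_min; auto. Qed.

Lemma min_path_along B om M c : is_ordering B om -> min_sources_along B om M c ->
  exists x, is_path B x /\ min_path B om x /\ forall j, M <= j -> fst (x j) = c (S j).
Proof.
  intros H [Hc Hs].
  destruct (min_chain_exists B om H M (c M) (Hc M (le_n M))) as [s [Hss Hsrc]].
  set (tail := fun j => (c (S j), snd (min_edge B om j (c (S j))))).
  set (x := splice s M (tail M) tail).
  assert (Xge : forall j, M <= j -> x j = tail j) by (intros; apply splice_self; lia).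
  assert (Sge : forall j, M <= j -> src x j = c j).
  { intros j Hj. destruct (Nat.eq_dec j M) as [->|Hne]; [unfold x; rewrite src_splice_le; auto|].
    destruct j as [|j]; [lia|]. cbn [src]. rewrite Xge by lia. reflexivity. }
  assert (Tail : forall j, M <= j -> edge_ok B x j /\ is_min B om j (fst (x j)) (edge_at x j)).
  { intros j Hj. destruct (min_edge_spec B om j (c (S j)) H (Hc (S j) ltac:(lia))) as [[I1 I2] Mi].
    assert (F : fst (min_edge B om j (c (S j))) = c j) by (apply Hs; auto; split; auto).
    assert (E : edge_at x j = min_edge B om j (c (S j))).
    { unfold edge_at. rewrite Sge, Xge by lia. cbn [tail snd]. rewrite <- F.
      destruct (min_edge B om j (c (S j))); reflexivity. }
    unfold edge_ok. rewrite E, Sge, Xge by lia. cbn [tail fst snd].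
    rewrite F in I2. repeat split; auto; apply Hc; lia. }
  assert (All : forall j, edge_ok B x j /\ is_min B om j (fst (x j)) (edge_at x j)).
  { intros j. destruct (Nat.lt_ge_cases j M) as [L|L]; [|exact (Tail j L)].
    unfold edge_ok, edge_at, x. rewrite src_splice_le, splice_lt by lia. exact (Hss j L). }
  exists x. split; [apply edge_ok_path; intros j; apply All|].
  split; [intros i; apply All|]. intros j Hj. rewrite Xge by exact Hj. reflexivity.
Qed.

Definition vershik_step (B : Bratteli) (om : order_data) (x y : path) (k : nat) : Prop :=
  (forall j, k < j -> y j = x j) /\ fst (y k) = fst (x k) /\
  is_succ B om k (fst (x k)) (edge_at x k) (edge_at y k) /\
  (forall j, j < k -> is_min B om j (fst (y j)) (edge_at y j)).

Definition vershik_rule (B : Bratteli) (om : order_data) (x y : path) : Prop :=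
  is_path B y /\
  ((max_path B om x /\ min_path B om y) \/
   (exists k, first_nonmax B om x k /\ vershik_step B om x y k)).

Definition vershik_candidate (B : Bratteli) (om : order_data) (x : path) : path :=
  epsilon (inhabits (fun _ : nat => (0, 0))) (vershik_rule B om x).

Section Candidate.
Variables (B : Bratteli) (om : order_data) (M : nat) (c : nat -> nat).
Hypothesis om_ord : is_ordering B om.
Hypothesis sources : min_sources B om M c.

Lemma min_edge_src a K : is_path B a -> M <= K ->
  is_min B om K (fst (a K)) (edge_at a K) -> src a K = c K.
Proof.
  intros Pa HK Hm. destruct (path_edge_ok B a Pa K) as [Hv Ho].
  exact (proj2 sources K _ _ HK Hv (path_in_r B a K Pa) Hm).
Qed.

Lemma min_prefixes_agree K a b : is_path B a -> is_path B b -> M <= K ->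
  (forall j, j <= K -> is_min B om j (fst (a j)) (edge_at a j)) ->
  (forall j, j <= K -> is_min B om j (fst (b j)) (edge_at b j)) ->
  forall j, j < K -> a j = b j.
Proof.
  intros Pa Pb HK Ma Mb. apply (min_chain_unique B om om_ord K).
  - apply min_chain_of_path; [exact Pa|intros j Hj; apply Ma; lia].
  - apply min_chain_of_path; [exact Pb|intros j Hj; apply Mb; lia].
  - rewrite !(min_edge_src _ K); auto.
Qed.

Lemma min_path_unique a b : is_path B a -> is_path B b ->
  min_path B om a -> min_path B om b -> forall j, a j = b j.
Proof.
  intros Pa Pb Ma Mb j. apply (min_prefixes_agree (j + M + 1)); auto; lia.
Qed.

Lemma vershik_rule_exists x : is_path B x -> exists y, vershik_rule B om x y.
Proof.
  intros Px. destruct (classic (max_path B om x)) as [Mx|Nx].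
  - destruct (min_path_along B om M c om_ord (min_sources_along_of B om M c sources))
      as [xm [Pm [Mm _]]].
    exists xm. split; [exact Pm|left; auto].
  - destruct (first_nonmax_exists B om x Nx) as [k Fk].
    pose proof (path_edge_ok B x Px) as Vx. destruct (Vx k) as [Hv _].
    destruct (exists_succ B om om_ord k (fst (x k)) (edge_at x k) Hv (edge_ok_in_r B x k (Vx k))
      (proj1 Fk)) as [[w l] Hsucc].
    pose proof Hsucc as [[Hw Hl] _]. simpl in Hw, Hl.
    destruct (min_chain_exists B om om_ord k w Hw) as [s [Hs Hsrc]].
    set (y := splice s k (fst (x k), l) x).
    assert (Ey : edge_at y k = (w, l))
      by (unfold edge_at, y; rewrite src_splice_le, Hsrc, splice_at by lia; reflexivity).
    exists y. split; [apply edge_ok_path; intros j|right; exists k; split; [exact Fk|]].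
    + destruct (lt_eq_lt_dec j k) as [[L|E]|L].
      * unfold edge_ok, y. rewrite src_splice_le, splice_lt by lia. exact (proj1 (Hs j L)).
      * subst j. unfold edge_ok, y. rewrite src_splice_le, Hsrc, splice_at by lia. simpl. auto.
      * unfold edge_ok, y. rewrite src_splice_gt, splice_gt by (try reflexivity; lia). apply Vx.
    + split; [intros j Hj; apply splice_gt, Hj|].
      split; [unfold y; rewrite splice_at; reflexivity|].
      split; [rewrite Ey; exact Hsucc|].
      intros j Hj. unfold edge_at, y. rewrite src_splice_le, splice_lt by lia. exact (proj2 (Hs j Hj)).
Qed.

Lemma candidate_spec x : is_path B x -> vershik_rule B om x (vershik_candidate B om x).
Proof. intros Px. unfold vershik_candidate. apply epsilon_spec, vershik_rule_exists, Px. Qed.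

Lemma vershik_steps_agree x1 x2 y1 y2 k : is_path B x1 -> is_path B y1 -> is_path B y2 ->
  x1 k = x2 k -> src x1 k = src x2 k ->
  vershik_step B om x1 y1 k -> vershik_step B om x2 y2 k -> forall j, j <= k -> y1 j = y2 j.
Proof.
  intros Px1 Py1 Py2 Ek Es [_ [F1 [S1 L1]]] [_ [F2 [S2 L2]]].
  assert (Ee : edge_at x1 k = edge_at x2 k) by (unfold edge_at; rewrite Ek, Es; reflexivity).
  rewrite <- Ek, <- Ee in S2. rewrite <- Ek in F2.
  apply (agree_of_min_below B om om_ord k); auto; [congruence|].
  exact (succ_unique B om om_ord k _ _ _ _ (proj1 (path_edge_ok B x1 Px1 k)) S1 S2).
Qed.

(* Continuity at a maximal path: nearby paths are either maximal or have
   their first non-maximal edge high up, so their images start minimally. *)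
Lemma candidate_continuous_at_max x : is_path B x -> max_path B om x ->
  forall n, exists m, forall y, is_path B y -> agree_upto x y m ->
    agree_upto (vershik_candidate B om x) (vershik_candidate B om y) n.
Proof.
  intros Px Mx n. exists (n + M + 1). intros y Py Ag.
  destruct (candidate_spec x Px) as [Pvx [[_ Nx]|[k [Fk _]]]];
    [|exfalso; exact (first_nonmax_not_max B om x k Fk Mx)].
  destruct (candidate_spec y Py) as [Pvy [[_ Ny]|[k [Fk [_ [_ [_ Lk]]]]]]].
  - intros i Hi. apply min_path_unique; auto.
  - assert (Kge : n + M < k).
    { destruct (Nat.lt_ge_cases (n + M) k) as [L|L]; [exact L|exfalso].
      apply (proj1 Fk). unfold edge_at. rewrite <- (Ag k), <- (agree_src x y (n + M + 1) k Ag) by lia.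
      exact (Mx k). }
    intros i Hi. apply (min_prefixes_agree (n + M)); auto; [lia|intros j Hj; apply Lk; lia|lia].
Qed.

(* Continuity at a non-maximal path x with first non-maximal level k: paths
   agreeing with x beyond k undergo the same Vershik step. *)
Lemma candidate_continuous_at_nonmax x k : is_path B x -> first_nonmax B om x k ->
  forall n, exists m, forall y, is_path B y -> agree_upto x y m ->
    agree_upto (vershik_candidate B om x) (vershik_candidate B om y) n.
Proof.
  intros Px Fk n. exists (n + k + 1). intros y Py Ag.
  pose proof (first_nonmax_agree B om x y k (n + k + 1) Ag ltac:(lia) Fk) as Fy.
  destruct (candidate_spec x Px) as [Pvx [[Mx _]|[k1 [F1 Sx]]]];
    [exfalso; exact (first_nonmax_not_max B om x k Fk Mx)|].
  destruct (candidate_spec y Py) as [Pvy [[My _]|[k2 [F2 Sy]]]];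
    [exfalso; exact (first_nonmax_not_max B om y k Fy My)|].
  rewrite (first_nonmax_unique B om x k1 k F1 Fk) in Sx.
  rewrite (first_nonmax_unique B om y k2 k F2 Fy) in Sy.
  intros j Hj. destruct (Nat.le_gt_cases j k) as [L|L].
  - apply (vershik_steps_agree x y _ _ k Px Pvx Pvy); [apply Ag; lia|apply (agree_src x y (n + k + 1)); auto; lia|exact Sx|exact Sy|exact L].
  - rewrite (proj1 Sx), (proj1 Sy) by exact L. apply Ag. lia.
Qed.

Lemma candidate_continuous : continuous_on B (vershik_candidate B om).
Proof.
  intros x Px. destruct (classic (max_path B om x)) as [Mx|Nx].
  - exact (candidate_continuous_at_max x Px Mx).
  - destruct (first_nonmax_exists B om x Nx) as [k Fk].
    exact (candidate_continuous_at_nonmax x k Px Fk).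
Qed.

End Candidate.

Lemma candidate_inverse B om M c M' c' : is_ordering B om ->
  min_sources B om M c -> min_sources B (reverse om) M' c' ->
  forall x, is_path B x -> forall j, vershik_candidate B (reverse om) (vershik_candidate B om x) j = x j.
Proof.
  intros H HM HM' x Px.
  pose proof (reverse_ordering B om H) as H'.
  destruct (candidate_spec B om M c H HM x Px) as [Py Cy].
  set (y := vershik_candidate B om x) in *.
  destruct (candidate_spec B (reverse om) M' c' H' HM' y Py) as [Pz Cz].
  set (z := vershik_candidate B (reverse om) y) in *.
  destruct Cy as [[Mx Ny]|[k [Fk [Gk [Ek [Sk Lk]]]]]].
  - destruct Cz as [[_ Nz]|[k [Fk _]]];
      [exact (min_path_unique B (reverse om) M' c' H' HM' z x Pz Px Nz Mx)|].
    exfalso. exact (first_nonmax_not_max B (reverse om) y k Fk Ny).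
  - pose proof (path_in_r B x k Px) as Ixk.
    assert (Fy : first_nonmax B (reverse om) y k).
    { split; [rewrite Ek; exact (succ_not_min B om k _ _ _ Ixk Sk)|exact Lk]. }
    destruct Cz as [[My _]|[k' [Fk' [Gk' [Ek' [Sk' Lk']]]]]];
      [exfalso; exact (first_nonmax_not_max B (reverse om) y k Fy My)|].
    rewrite (first_nonmax_unique B (reverse om) y k' k Fk' Fy) in *.
    rewrite Ek in Sk'.
    pose proof (succ_reverse B om k _ _ _ Ixk Sk) as Sx.
    intros j. destruct (Nat.le_gt_cases j k) as [L|L].
    + apply (agree_of_min_below B (reverse om) H' k z x Pz Px Lk' (proj2 Fk)); [congruence| |exact L].
      exact (succ_unique B (reverse om) H' k _ _ _ _ (proj1 (path_edge_ok B x Px k)) Sk' Sx).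
    + rewrite Gk', Gk by exact L. reflexivity.
Qed.

Theorem perfect_of_extreme_sources B om M c M' c' : is_ordering B om ->
  min_sources B om M c -> min_sources B (reverse om) M' c' -> perfect B om.
Proof.
  intros H HM HM'. pose proof (reverse_ordering B om H) as H'.
  exists (vershik_candidate B om). split; [|split; [|split]].
  - split; [intros x Px; exact (proj1 (candidate_spec B om M c H HM x Px))|].
    split; [exact (candidate_continuous B om M c H HM)|].
    exists (vershik_candidate B (reverse om)).
    split; [intros x Px; exact (proj1 (candidate_spec B (reverse om) M' c' H' HM' x Px))|].
    split; [exact (candidate_continuous B (reverse om) M' c' H' HM')|].
    split; [exact (candidate_inverse B om M c M' c' H HM HM')|].
    exact (candidate_inverse B (reverse om) M' c' M c H' HM' HM).
  - intros x Px Mx. destruct (candidate_spec B om M c H HM x Px) as [_ [[_ N]|[k [Fk _]]]];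
      [exact N|exfalso; exact (first_nonmax_not_max B om x k Fk Mx)].
  - intros y Py My. exists (vershik_candidate B (reverse om) y).
    destruct (candidate_spec B (reverse om) M' c' H' HM' y Py) as [Pz Cz].
    split; [exact Pz|split; [|exact (candidate_inverse B (reverse om) M' c' M c H' HM' HM y Py)]].
    destruct Cz as [[_ N]|[k [Fk _]]]; [exact N|exfalso; exact (first_nonmax_not_max _ _ _ _ Fk My)].
  - intros x Px k Nk Hk.
    destruct (candidate_spec B om M c H HM x Px) as [_ [[Mx _]|[k' [Fk' Step]]]];
      [exfalso; exact (Nk (Mx k))|].
    rewrite (first_nonmax_unique B om x k' k Fk' (conj Nk Hk)) in Step. exact Step.
Qed.

Definition glue (om : order_data) (M : nat) (tail : order_data) : order_data :=
  fun n v a b => if n <? M then om n v a b else tail n v a b.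

Lemma glue_below om M tail n v : n < M -> glue om M tail n v = om n v.
Proof. intros H. unfold glue. apply Nat.ltb_lt in H. rewrite H. reflexivity. Qed.

Lemma glue_above om M tail n v : M <= n -> glue om M tail n v = tail n v.
Proof. intros H. unfold glue. apply Nat.ltb_ge in H. rewrite H. reflexivity. Qed.

Lemma is_min_glue_above B om M tail n v e :
  M <= n -> is_min B (glue om M tail) n v e -> is_min B tail n v e.
Proof. intros H Hm. unfold is_min in *. rewrite glue_above in Hm by exact H. exact Hm. Qed.

Lemma is_max_glue_above B om M tail n v e :
  M <= n -> is_max B (glue om M tail) n v e -> is_max B tail n v e.
Proof. intros H Hm. unfold is_max in *. rewrite glue_above in Hm by exact H. exact Hm. Qed.

Definition linear_tail (B : Bratteli) (tail : order_data) : Prop :=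
  forall n v, v < nv B (S n) -> strict_linear (in_r B n v) (tail n v).

Lemma glue_ordering B om M tail :
  is_ordering B om -> linear_tail B tail -> is_ordering B (glue om M tail).
Proof.
  intros Hom Ht n v Hv. destruct (Nat.lt_ge_cases n M) as [L|L].
  - rewrite glue_below by exact L. apply Hom, Hv.
  - rewrite glue_above by exact L. apply Ht, Hv.
Qed.

Lemma level_bound (L : list (nat * nat)) n v : In (n, v) L -> n <= list_max (map fst L).
Proof.
  intros H. pose proof (proj1 (list_max_le (map fst L) _) (le_n _)) as F.
  rewrite Forall_forall in F. apply F, in_map_iff. now exists (n, v).
Qed.

(* Density by gluing: if gluing a fixed linear tail at any level M >= N onto
   any ordering yields a P-ordering, then P is dense, since a basic open set
   only constrains finitely many levels. *)
Lemma dense_by_gluing B (P : order_data -> Prop) tail N : linear_tail B tail ->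
  (forall om M, N <= M -> is_ordering B (glue om M tail) -> P (glue om M tail)) ->
  dense_in_orderings B P.
Proof.
  intros Ht HP om Hom L.
  set (M := N + S (list_max (map fst L))).
  pose proof (glue_ordering B om M tail Hom Ht) as Hord.
  exists (glue om M tail). split; [exact Hord|split; [apply HP; [lia|exact Hord]|]].
  intros n v Hin Hv a b Ha Hb. pose proof (level_bound L n v Hin).
  rewrite glue_below by lia. reflexivity.
Qed.

Definition lex_by (f : nat -> nat) (a b : nat * nat) : Prop :=
  f (fst a) < f (fst b) \/ (f (fst a) = f (fst b) /\ snd a < snd b).

Lemma lex_by_linear B n v f :
  (forall w1 w2, w1 < nv B n -> w2 < nv B n -> f w1 = f w2 -> w1 = w2) ->
  strict_linear (in_r B n v) (lex_by f).
Proof.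
  intros Hf. unfold lex_by. split; [|split].
  - intros a _ [H|[_ H]]; lia.
  - intros a b c _ _ _ [H1|[H1 H2]] [H3|[H3 H4]]; lia.
  - intros [a1 a2] [b1 b2] [Ha _] [Hb _]. simpl in *.
    destruct (lt_eq_lt_dec (f a1) (f b1)) as [[L|E]|L]; [tauto| |tauto].
    pose proof (Hf a1 b1 Ha Hb E) as ->.
    destruct (lt_eq_lt_dec a2 b2) as [[L|E']|L]; [tauto|subst; tauto|tauto].
Qed.

Definition zero_last (B : Bratteli) (n w : nat) : nat := if w =? 0 then nv B n else w.

Lemma zero_last_inj B n w1 w2 :
  w1 < nv B n -> w2 < nv B n -> zero_last B n w1 = zero_last B n w2 -> w1 = w2.
Proof. intros H1 H2. unfold zero_last. destruct (Nat.eqb_spec w1 0), (Nat.eqb_spec w2 0); lia. Qed.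

Lemma zero_last_min B j v e : 2 <= nv B j -> 0 < inc B j v 1 -> in_r B j v e ->
  (forall e', in_r B j v e' -> ~ lex_by (zero_last B j) e' e) -> fst e = 1.
Proof.
  intros H2 Hi [Hw Hl] Hm. destruct e as [w l]. simpl in *.
  destruct (Nat.eq_dec w 1) as [->|Hne]; [reflexivity|exfalso].
  apply (Hm (1, 0)); [split; simpl; lia|].
  unfold lex_by, zero_last; simpl. destruct (Nat.eqb_spec w 0); left; lia.
Qed.

Lemma zero_last_max B j v e : 2 <= nv B j -> 0 < inc B j v 0 -> in_r B j v e ->
  (forall e', in_r B j v e' -> ~ lex_by (zero_last B j) e e') -> fst e = 0.
Proof.
  intros H2 Hi [Hw Hl] Hm. destruct e as [w l]. simpl in *.
  destruct (Nat.eq_dec w 0) as [->|Hne]; [reflexivity|exfalso].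
  apply (Hm (0, 0)); [split; simpl; lia|].
  unfold lex_by, zero_last; simpl. destruct (Nat.eqb_spec w 0); [lia|left; lia].
Qed.

Lemma index_min B j v e : 0 < inc B j v 0 -> in_r B j v e ->
  (forall e', in_r B j v e' -> ~ lex_by (fun w => w) e' e) -> fst e = 0.
Proof.
  intros Hi [Hw Hl] Hm. destruct e as [w l]. simpl in *.
  destruct (Nat.eq_dec w 0) as [->|Hne]; [reflexivity|exfalso].
  apply (Hm (0, 0)); [split; simpl; lia|]. left; simpl; lia.
Qed.

Definition perfect_tail (B : Bratteli) : order_data := fun n _ => lex_by (zero_last B n).

Lemma perfect_tail_linear B : linear_tail B (perfect_tail B).
Proof. intros n v _. apply lex_by_linear, zero_last_inj. Qed.

Lemma glued_perfect_tail_perfect B om M : positive_incidence B ->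
  (forall n, M <= n -> 2 <= nv B n) -> is_ordering B (glue om M (perfect_tail B)) ->
  perfect B (glue om M (perfect_tail B)).
Proof.
  intros Hpos Hnv Hord.
  apply (perfect_of_extreme_sources B _ M (fun _ => 1) M (fun _ => 0) Hord).
  - split; [intros j Hj; specialize (Hnv j Hj); lia|].
    intros j v e Hj Hv He Hm. apply is_min_glue_above in Hm; [|exact Hj].
    apply (zero_last_min B j v e (Hnv j Hj) (Hpos j v 1 Hv ltac:(specialize (Hnv j Hj); lia)) He Hm).
  - split; [intros j Hj; specialize (Hnv j Hj); lia|].
    intros j v e Hj Hv He Hm. apply is_max_glue_above in Hm; [|exact Hj].
    apply (zero_last_max B j v e (Hnv j Hj) (Hpos j v 0 Hv ltac:(specialize (Hnv j Hj); lia)) He Hm).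
Qed.

Definition twisted_tail (B : Bratteli) : order_data :=
  fun n v => if v =? 1 then lex_by (fun w => w) else lex_by (zero_last B n).

Lemma twisted_tail_linear B : linear_tail B (twisted_tail B).
Proof.
  intros n v _. unfold twisted_tail. destruct (v =? 1);
    apply lex_by_linear; [intros; assumption|apply zero_last_inj].
Qed.

Section TwistedTail.
Variables (B : Bratteli) (om : order_data) (M : nat).
Hypothesis positive : positive_incidence B.
Hypothesis two_vertices : forall n, M <= n -> 2 <= nv B n.
Local Notation tw := (glue om M (twisted_tail B)).
Hypothesis tw_ord : is_ordering B tw.

Lemma edges_01 j v w : M <= j -> v < 2 -> w < 2 -> in_r B j v (w, 0).
Proof.
  intros Hj Hv Hw. pose proof (two_vertices j Hj). pose proof (two_vertices (S j) ltac:(lia)).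
  split; simpl; [lia|]. apply positive; lia.
Qed.

Lemma tw_max_into_0 j e : M <= j -> in_r B j 0 e -> is_max B tw j 0 e -> fst e = 0.
Proof.
  intros Hj He Hm. apply is_max_glue_above in Hm; [|exact Hj].
  exact (zero_last_max B j 0 e (two_vertices j Hj) (proj2 (edges_01 j 0 0 Hj ltac:(lia) ltac:(lia))) He Hm).
Qed.

Lemma tw_min_into_0 j e : M <= j -> in_r B j 0 e -> is_min B tw j 0 e -> fst e = 1.
Proof.
  intros Hj He Hm. apply is_min_glue_above in Hm; [|exact Hj].
  exact (zero_last_min B j 0 e (two_vertices j Hj) (proj2 (edges_01 j 0 1 Hj ltac:(lia) ltac:(lia))) He Hm).
Qed.

Lemma tw_min_into_1 j e : M <= j -> in_r B j 1 e -> is_min B tw j 1 e -> fst e = 0.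
Proof.
  intros Hj He Hm. apply is_min_glue_above in Hm; [|exact Hj].
  exact (index_min B j 1 e (proj2 (edges_01 j 1 0 Hj ltac:(lia) ltac:(lia))) He Hm).
Qed.

Lemma min_paths_alternate z k : is_path B z ->
  (forall j, j < k -> is_min B tw j (fst (z j)) (edge_at z j)) -> src z k = 1 ->
  forall t, M + t < k -> fst (z (k - 1 - t)) = if Nat.even t then 1 else 0.
Proof.
  intros Pz Mz Top. induction t as [|t IH]; intros Ht.
  - rewrite Nat.sub_0_r. replace k with (S (k - 1)) in Top by lia. exact Top.
  - specialize (IH ltac:(lia)).
    assert (Hsrc : src z (k - 1 - t) = fst (z (k - 1 - S t))).
    { replace (k - 1 - t) with (S (k - 1 - S t)) by lia. reflexivity. }
    pose proof (path_in_r B z (k - 1 - t) Pz) as Iz. pose proof (Mz (k - 1 - t) ltac:(lia)) as Mzt.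
    unfold edge_at in Iz, Mzt. rewrite Hsrc, IH in Iz, Mzt. rewrite Nat.even_succ, <- Nat.negb_even.
    destruct (Nat.even t).
    + exact (tw_min_into_1 (k - 1 - t) _ ltac:(lia) Iz Mzt).
    + exact (tw_min_into_0 (k - 1 - t) _ ltac:(lia) Iz Mzt).
Qed.

Lemma max_path_at_0 : exists X, is_path B X /\ max_path B tw X /\ forall j, S M <= j -> src X j = 0.
Proof.
  destruct (min_path_along B (reverse tw) M (fun _ => 0) (reverse_ordering B tw tw_ord))
    as [X [PX [MX TX]]].
  - split; [intros j Hj; specialize (two_vertices j Hj); lia|]. exact tw_max_into_0.
  - exists X. split; [exact PX|split; [exact MX|]].
    intros [|j] Hj; [lia|]. exact (TX j ltac:(lia)).
Qed.

Definition exit_path (X : path) (k : nat) : path :=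
  splice X k (1, inc B k 1 0 - 1) (fun _ => (1, 0)).

Lemma exit_path_is_path X k : is_path B X -> S M <= k -> src X k = 0 -> is_path B (exit_path X k).
Proof.
  intros PX Hk SX. apply edge_ok_path. intros j. unfold edge_ok, exit_path.
  destruct (lt_eq_lt_dec j k) as [[L|E]|L].
  - rewrite src_splice_le, splice_lt by lia. exact (path_edge_ok B X PX j).
  - subst j. rewrite src_splice_le, splice_at, SX by lia. simpl.
    pose proof (edges_01 k 1 0 ltac:(lia) ltac:(lia) ltac:(lia)) as [H1 H2].
    pose proof (two_vertices k ltac:(lia)). pose proof (two_vertices (S k) ltac:(lia)). simpl in *. lia.
  - rewrite src_splice_gt, splice_gt by (try reflexivity; lia).
    destruct j as [|j]; [lia|]. cbn [src fst snd].
    pose proof (edges_01 (S j) 1 1 ltac:(lia) ltac:(lia) ltac:(lia)) as [H1 H2].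
    pose proof (two_vertices (S (S j)) ltac:(lia)). simpl in *. lia.
Qed.

Lemma exit_successor k : M <= k -> is_succ B tw k 1 (0, inc B k 1 0 - 1) (1, 0).
Proof.
  intros Hk. pose proof (proj2 (edges_01 k 1 0 Hk ltac:(lia) ltac:(lia))) as Hi. simpl in Hi.
  unfold is_succ. rewrite glue_above by exact Hk. cbn [twisted_tail Nat.eqb].
  split; [exact (edges_01 k 1 1 Hk ltac:(lia) ltac:(lia))|].
  split; [left; simpl; lia|].
  intros [w l] [Hw Hl] R1 R2. unfold lex_by in R1, R2. simpl in *. destruct w; lia.
Qed.

Lemma vershik_exit_parity phi X k : vershik_map B tw phi ->
  is_path B X -> max_path B tw X -> (forall j, S M <= j -> src X j = 0) -> S M <= k ->
  fst (phi (exit_path X k) M) = if Nat.even (k - 1 - M) then 1 else 0.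
Proof.
  intros [[Hpath _] [_ [_ Hstep]]] PX MX SX Hk.
  pose proof (exit_path_is_path X k PX Hk (SX k Hk)) as Py.
  set (y := exit_path X k) in *.
  assert (Ey : fst (y k) = 1 /\ edge_at y k = (0, inc B k 1 0 - 1)).
  { unfold y, exit_path, edge_at. rewrite src_splice_le, SX, splice_at by lia. auto. }
  destruct Ey as [Fy Ey].
  assert (Below : forall j, j < k -> is_max B tw j (fst (y j)) (edge_at y j)).
  { intros j Hj. unfold edge_at, y, exit_path. rewrite src_splice_le, splice_lt by lia. exact (MX j). }
  assert (Nk : ~ is_max B tw k (fst (y k)) (edge_at y k)).
  { rewrite Fy, Ey. intros Hmax. apply (Hmax (1, 0)); apply (exit_successor k ltac:(lia)). }
  destruct (Hstep y Py k Nk Below) as [_ [_ [Succ Mins]]].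
  rewrite Fy, Ey in Succ.
  assert (Top : edge_at (phi y) k = (1, 0))
    by exact (succ_unique B tw tw_ord k 1 _ _ _ ltac:(pose proof (two_vertices (S k)); lia)
                Succ (exit_successor k ltac:(lia))).
  assert (Src : src (phi y) k = 1) by (change (fst (edge_at (phi y) k) = 1); rewrite Top; reflexivity).
  pose proof (min_paths_alternate (phi y) k (Hpath y Py) Mins Src (k - 1 - M) ltac:(lia)) as P.
  replace (k - 1 - (k - 1 - M)) with M in P by lia. exact P.
Qed.

Theorem glued_twisted_tail_not_perfect : ~ perfect B tw.
Proof.
  intros [phi Hphi]. destruct max_path_at_0 as [X [PX [MX SX]]].
  pose proof Hphi as [[_ [Hcont _]] _].
  destruct (Hcont X PX (S M)) as [m Hm].
  assert (Same : forall k, S M <= k -> m <= k ->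
            fst (phi (exit_path X k) M) = fst (phi X M)).
  { intros k Hk Hmk. rewrite (Hm (exit_path X k)); [reflexivity| |intros i Hi|lia].
    - exact (exit_path_is_path X k PX Hk (SX k Hk)).
    - unfold exit_path. rewrite splice_lt by lia. reflexivity. }
  pose proof (vershik_exit_parity phi X (m + S M) Hphi PX MX SX ltac:(lia)) as P1.
  pose proof (vershik_exit_parity phi X (S (m + S M)) Hphi PX MX SX ltac:(lia)) as P2.
  rewrite !Same in P1, P2 by lia. rewrite P1 in P2.
  replace (S (m + S M) - 1 - M) with (S (m + S M - 1 - M)) in P2 by lia.
  rewrite Nat.even_succ, <- Nat.negb_even in P2. destruct (Nat.even (m + S M - 1 - M)); discriminate.
Qed.

End TwistedTail.

Lemma eventually_two_vertices B d : has_rank B d -> 2 <= d ->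
  exists N, forall n, N <= n -> 2 <= nv B n.
Proof.
  intros [_ [_ Hmin]] Hd.
  assert (Rare : forall d', d' < d -> exists N, forall n, N <= n -> nv B n <> d').
  { intros d' Hd'. pose proof (Hmin d' Hd') as Hn. apply not_all_ex_not in Hn.
    destruct Hn as [N HN]. exists N. intros n Hn E. apply HN. eauto. }
  destruct (Rare 0 ltac:(lia)) as [N0 H0]. destruct (Rare 1 ltac:(lia)) as [N1 H1].
  exists (N0 + N1). intros n Hn. pose proof (H0 n ltac:(lia)). pose proof (H1 n ltac:(lia)). lia.
Qed.

Theorem mainTheorem2 (B : Bratteli) (d : nat) :
  simple B -> has_rank B d -> 2 <= d -> positive_incidence B ->
  dense_in_orderings B (perfect B) /\
  dense_in_orderings B (fun om => ~ perfect B om).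
Proof.
  intros _ Hrank Hd Hpos.
  destruct (eventually_two_vertices B d Hrank Hd) as [N HN].
  assert (Hnv : forall M, N <= M -> forall n, M <= n -> 2 <= nv B n) by (intros; apply HN; lia).
  split.
  - apply (dense_by_gluing B _ (perfect_tail B) N (perfect_tail_linear B)).
    intros om M HM Hord. exact (glued_perfect_tail_perfect B om M Hpos (Hnv M HM) Hord).
  - apply (dense_by_gluing B _ (twisted_tail B) N (twisted_tail_linear B)).
    intros om M HM Hord. exact (glued_twisted_tail_not_perfect B om M Hpos (Hnv M HM) Hord).
Qed.
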